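(* Let $C$ be a closed convex subset of a Banach space and let $T:C\to C$ be nonexpansive. Suppose that for some $\alpha\in(0,1)$ the mapping $F=(I-\alpha T)^{-1}(1-\alpha)I:C\to C$ satisfies $F(D)=D$ for some nonempty bounded set $D\subset C$. Then $T$ has a fixed point.
   Context: $T$ nonexpansive means $\|Tx-Ty\|\le\|x-y\|$ for all $x,y\in C$. For $x\in C$, $Fx$ is the unique point $y\in C$ satisfying $y-\alpha Ty=(1-\alpha)x$ (equivalently, $y=\alpha Ty+(1-\alpha)x$), which exists and is unique by the Banach contraction principle. *)

From HB Require Import structures.
From mathcomp Require Import all_boot all_order all_algebra.
From mathcomp Require Import all_classical all_reals all_analysis.
Set Implicit Arguments. Unset Strict Implicit. Unset Printing Implicit Defensive.
Import Order.TTheory GRing.Theory Num.Theory.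
Import numFieldNormedType.Exports.
Local Open Scope classical_set_scope.
Local Open Scope ring_scope.

Definition nonexpansive_on (R : realType) (E : normedModType R)
    (C : set E) (T : E -> E) : Prop :=
  forall x y, C x -> C y -> `|T x - T y| <= `|x - y|.

(* F x := the (unique) y in C with y = alpha T y + (1 - alpha) x,
   i.e. F = (I - alpha T)^{-1} (1 - alpha) I.  Chosen via [get]; when C is
   closed convex, T : C -> C nonexpansive, 0 < alpha < 1 and x in C, such a
   y exists and is unique (Banach contraction principle). *)
Definition resolventF (R : realType) (E : normedModType R)
    (C : set E) (T : E -> E) (alpha : R) (x : E) : E :=
  get [set y | C y /\ y = alpha *: T y + (1 - alpha) *: x].

From HB Require Import structures.
From mathcomp Require Import all_boot all_order all_algebra.
From mathcomp Require Import all_classical all_reals all_analysis.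
From mathcomp Require Import lra.
Set Implicit Arguments. Unset Strict Implicit. Unset Printing Implicit Defensive.
Import Order.TTheory GRing.Theory Num.Theory.
Import numFieldNormedType.Exports.
Local Open Scope classical_set_scope.
Local Open Scope ring_scope.

(* Since F(D) = D, there is a backward F-orbit (z_k) in D, i.e.
   z_k = alpha T z_k + (1 - alpha) z_(k+1).  The differences d_k = z_(k+1) - z_k
   then satisfy d_k = alpha e_k + (1 - alpha) d_(k+1) with |e_k| <= |d_k|, and
   their partial sums z_(j+n) - z_j stay bounded.  Unfolding the recurrence n
   times (an estimate of Ishikawa type) gives
   |d_j| <= (1 - (1 - alpha)^n) sup |d| + (1 - alpha)^n / n * bound,
   which forces sup |d| = 0: the orbit is constant, and its point is fixed by T. *)

Section IshikawaEstimate.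
Variables (R : realType) (E : normedModType R) (alpha c : R) (d e : nat -> E).
Hypotheses (alpha_ge0 : 0 <= alpha) (alpha_lt1 : alpha < 1).
Hypotheses (e_le : forall i, `|e i| <= c) (d_le : forall i, `|d i| <= c).
Hypothesis d_rec : forall i, d i = alpha *: e i + (1 - alpha) *: d i.+1.

Lemma ishikawa_estimate n j (u : E) (a k : R) :
  0 <= k -> n%:R * k <= a * (1 - alpha) ^+ n ->
  `|a *: d j + u| <= `|u + k *: \sum_(j <= i < j + n) d i| + (a - n%:R * k) * c.
Proof.
elim: n j u a => [|n IH] j u a k0 nk.
  rewrite addn0 big_geq // scaler0 addr0 mul0r subr0.
  rewrite mul0r expr0 mulr1 in nk.
  apply: (le_trans (ler_normD _ _)); rewrite normrZ ger0_norm // addrC lerD2l.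
  by rewrite ler_wpM2l.
have c0 : 0 <= c := le_trans (normr_ge0 _) (d_le 0).
have pn_gt0 : 0 < (1 - alpha) ^+ n.+1 by apply: exprn_gt0; rewrite subr_gt0.
have pn_le1 : (1 - alpha) ^+ n.+1 <= 1 by rewrite exprn_ile1 ?subr_ge0 ?gerBl // ltW.
have a0 : 0 <= a.
  rewrite -(pmulr_lge0 _ pn_gt0); apply: le_trans nk; exact: mulr_ge0.
have ka : k <= a.
  apply: le_trans (ler_piMr a0 pn_le1); apply: le_trans nk.
  by rewrite -natr1 mulrDl mul1r lerDr mulr_ge0.
have ak0 : 0 <= (a - k) * alpha by rewrite mulr_ge0 ?subr_ge0.
(* One application of the recurrence moves the weight [a - k] from [d j] to [d j.+1]. *)
have split_dj : a *: d j + u =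
    ((a - k) * (1 - alpha)) *: d j.+1 + (u + k *: d j) + ((a - k) * alpha) *: e j.
  rewrite -{1}(subrK k a) scalerDl {1}d_rec scalerDr !scalerA.
  by rewrite [RHS]addrC -!addrA [u + _]addrC.
have nk' : n%:R * k <= (a - k) * (1 - alpha) * (1 - alpha) ^+ n.
  rewrite -mulrA -exprS mulrBl.
  have : k * (1 - alpha) ^+ n.+1 <= k by rewrite ler_piMr.
  move: nk; rewrite -natr1 mulrDl mul1r; lra.
have sum_split : k *: \sum_(j <= i < j + n.+1) d i =
    k *: d j + k *: \sum_(j.+1 <= i < j.+1 + n) d i.
  by rewrite big_ltn ?addnS ?ltnS ?leq_addr // scalerDr.
rewrite split_dj sum_split [u + (_ + _)]addrA; apply: (le_trans (ler_normD _ _)).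
have e_term : `|((a - k) * alpha) *: e j| <= (a - k) * alpha * c.
  by rewrite normrZ ger0_norm // (ler_wpM2l ak0 (e_le j)).
apply: le_trans (lerD (IH j.+1 _ _ k0 nk') e_term) _.
rewrite -[leLHS]addrA lerD2l -mulrDl ler_wpM2r // -natr1; lra.
Qed.

End IshikawaEstimate.

Lemma recurrence_bounded_partial_sums_eq0 (R : realType) (E : normedModType R)
    (alpha M : R) (d e : nat -> E) :
  0 <= alpha -> alpha < 1 ->
  (forall i, `|e i| <= `|d i|) ->
  (forall i, d i = alpha *: e i + (1 - alpha) *: d i.+1) ->
  (forall j n, `|\sum_(j <= i < j + n) d i| <= M) ->
  forall i, d i = 0.
Proof.
move=> alpha_ge0 alpha_lt1 e_le_d d_rec sum_le.
have d_le i : `|d i| <= M by have := sum_le i 1%N; rewrite addn1 big_nat1.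
have supd : has_sup (range (fun i => `|d i|)).
  by split; [exists `|d 0%N|, 0%N | exists M => _ [i _ <-]].
pose c := sup (range (fun i => `|d i|)).
have d_le_c i : `|d i| <= c by apply: sup_upper_bound => //; exists i.
have e_le_c i : `|e i| <= c := le_trans (e_le_d i) (d_le_c i).
suff c_le0 : c <= 0.
  by move=> i; apply/normr0_eq0/le_anti; rewrite normr_ge0 andbT (le_trans (d_le_c i)).
rewrite leNgt; apply/negP => c_gt0.
pose n := (Num.trunc (2 * M / c)).+1.
have nc : 2 * M < n%:R * c by rewrite -ltr_pdivrMr // truncnS_gt.
pose p := (1 - alpha) ^+ n.
have p_gt0 : 0 < p by apply: exprn_gt0; rewrite subr_gt0.
have [_ [j _ <-] dj_gt] := sup_adherent (divr_gt0 (mulr_gt0 p_gt0 c_gt0) (ltr0Sn _ 1)) supd.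
pose k := p / n%:R.
have k_gt0 : 0 < k by rewrite divr_gt0 ?ltr0n.
have nk : n%:R * k = p by rewrite mulrCA divff ?mulr1 ?pnatr_eq0.
(* Spreading the weight of [d j] over [n] consecutive terms loses [p c] from the
   trivial bound [c], while the telescoping partial sum only costs [k M < p c / 2]. *)
have dj_le : `|d j| <= k * M + (1 - p) * c.
  have := ishikawa_estimate alpha_ge0 alpha_lt1 e_le_c d_le_c d_rec
    (n := n) j 0 (a := 1) (ltW k_gt0).
  rewrite nk mul1r scale1r addr0 add0r normrZ gtr0_norm // => /(_ (lexx _)) est.
  by apply: (le_trans est); rewrite lerD2r (ler_wpM2l (ltW k_gt0) (sum_le j n)).
have kM : k * (2 * M) < p * c.
  have : k * (2 * M) < k * (n%:R * c) by rewrite ltr_pM2l.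
  by rewrite [k * (_ * c)]mulrA (mulrC k n%:R) nk.
rewrite -/c in dj_gt; lra.
Qed.

Lemma bounded_backward_orbit_constant (R : realType) (E : normedModType R)
    (T : E -> E) (alpha B : R) (z : nat -> E) :
  0 <= alpha -> alpha < 1 ->
  (forall k l, `|T (z k) - T (z l)| <= `|z k - z l|) ->
  (forall k, `|z k| <= B) ->
  (forall k, z k = alpha *: T (z k) + (1 - alpha) *: z k.+1) ->
  forall k, z k.+1 = z k.
Proof.
move=> alpha_ge0 alpha_lt1 T_ne z_le z_rec k; apply/eqP; rewrite -subr_eq0; apply/eqP.
pose d i := z i.+1 - z i; pose e i := T (z i.+1) - T (z i).
apply: (@recurrence_bounded_partial_sums_eq0 _ _ alpha (B + B) d e) => // [i|i|j n].
- exact: T_ne.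
- by rewrite /d /e !scalerBr {1}z_rec [in X in _ - X]z_rec opprD addrACA.
- rewrite (telescope_sumr _ (leq_addr n j)).
  by apply: (le_trans (ler_normB _ _)); rewrite lerD.
Qed.

Lemma backward_orbit_of_image_eq (U : Type) (f : U -> U) (D : set U) :
  f @` D = D -> D !=set0 ->
  exists z : nat -> U, forall k, D (z k) /\ f (z k.+1) = z k.
Proof.
move=> fD [x0 Dx0].
have [g gP] : {g : U -> U & forall x, D x -> D (g x) /\ f (g x) = x}.
  apply: (@choice _ _ (fun x y => D x -> D y /\ f y = x)) => x.
  have [Dx|nDx] := pselect (D x); last by exists x => /nDx.
  have [y Dy fy] : (f @` D) x by rewrite fD.
  by exists y.
have zD k : D (iter k g x0) by elim: k => //= k IH; exact: (gP _ IH).1.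
by exists (fun k => iter k g x0) => k; split=> //; exact: (gP _ (zD k)).2.
Qed.

Lemma resolventF_spec (R : realType) (E : completeNormedModType R)
    (C : set E) (T : E -> E) (alpha : R) (y : E) :
  closed C -> convex_set C ->
  (forall x, C x -> C (T x)) -> nonexpansive_on C T ->
  0 <= alpha -> alpha < 1 -> C y ->
  C (resolventF C T alpha y) /\
  resolventF C T alpha y = alpha *: T (resolventF C T alpha y) + (1 - alpha) *: y.
Proof.
move=> clC cvC TC neT alpha_ge0 alpha_lt1 Cy.
pose g w := alpha *: T w + (1 - alpha) *: y.
apply: (@getPex _ [set w | C w /\ w = g w]).
have gC : {homo g : w / C w >-> C w}.
  move=> w Cw; have := cvC _ _ (Itv01 alpha_ge0 (ltW alpha_lt1)) (mem_set (TC _ Cw)) (mem_set Cy).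
  by rewrite inE.
have g_contr : is_contraction (mkfun_fun gC).
  exists (NngNum alpha_ge0); split => //= -[w1 w2] /= [Cw1 Cw2].
  rewrite /g opprD addrACA subrr addr0 -scalerBr normrZ ger0_norm //.
  by rewrite ler_wpM2l // neT.
have [p Cp pE] := banach_fixed_point g_contr clC (ex_intro _ y Cy).
by exists p.
Qed.

Theorem corollary3p4 (R : realType) (E : completeNormedModType R)
    (C : set E) (T : E -> E) (alpha : R) (D : set E) :
  closed C -> convex_set C ->
  (forall x, C x -> C (T x)) -> nonexpansive_on C T ->
  0 < alpha -> alpha < 1 ->
  D `<=` C -> D !=set0 -> [bounded x | x in D] ->
  resolventF C T alpha @` D = D ->
  exists x, C x /\ T x = x.
Proof.
move=> clC cvC TC neT alpha_gt0 alpha_lt1 DC D0 bD FD.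
have [z zP] := backward_orbit_of_image_eq FD D0.
have zC k : C (z k) := DC _ (zP k).1.
have z_rec k : z k = alpha *: T (z k) + (1 - alpha) *: z k.+1.
  have [_] := resolventF_spec clC cvC TC neT (ltW alpha_gt0) alpha_lt1 (zC k.+1).
  by rewrite (zP k).2.
have [B z_le] : exists B, forall k, `|z k| <= B.
  have [M [_ M_bd]] := bD; exists (M + 1) => k.
  by apply: M_bd (zP k).1; rewrite ltrDl.
have z_const := bounded_backward_orbit_constant (ltW alpha_gt0) alpha_lt1
  (fun k l => neT _ _ (zC k) (zC l)) z_le z_rec.
exists (z 0%N); split => //.
apply: (scalerI (lt0r_neq0 alpha_gt0)); apply: (addIr ((1 - alpha) *: z 0%N)).
by rewrite -scalerDl subrKC scale1r {3}(z_rec 0%N) z_const.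
Qed.
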